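(* If $r$ is a nonnegative integer and $m$ is an integer satisfying $2m+r\ge0$, then $$2^r\binom{m+r}{r}=\sum_{i=0}^{\lfloor r/2\rfloor}(-1)^i\binom{2m+2r-2i}{r-2i}\binom{m+r}{i}.$$ *)

From mathcomp Require Import all_boot all_order all_algebra.
Set Implicit Arguments. Unset Strict Implicit. Unset Printing Implicit Defensive.
Import Order.TTheory GRing.Theory Num.Theory.
Local Open Scope ring_scope.

(* Generalized binomial coefficient  binom(n, k)  for an integer upper index
   n and a natural lower index k:  n (n-1) ... (n-k+1) / k!. *)
Definition binz (n : int) (k : nat) : int :=
  if (0 <= n) then ('C(`|n|%N, k))%:Z
  else (-1) ^+ k * ('C((k + `|n|%N).-1, k))%:Z.

From mathcomp Require Import all_boot all_order all_algebra.
From mathcomp Require Import zify ring.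
Import Order.TTheory GRing.Theory Num.Theory.
Local Open Scope ring_scope.

(* Compare the coefficients of x^r in (1 + 2x)^N = ((1 + x)^2 - x^2)^N, expanding the
   right-hand side binomially: the i-th term is (-1)^i C(N,i) x^(2i) (1 + x)^(2N-2i).
   Under 2m + r >= 0 the upper index N = m + r is nonnegative, so every generalized
   binomial in the statement is an ordinary one, 2m + 2r - 2i being 2N - 2i. *)

Lemma coef_exprCX1 (R : comNzRingType) (c : R) (n k : nat) :
  ((c%:P * 'X + 1) ^+ n)`_k = c ^+ k *+ 'C(n, k).
Proof.
rewrite exprD1n.
under eq_bigr => i _ do rewrite exprMn -rmorphXn mul_polyC scalerMnl.
rewrite coef_sumMXn; case: (ltnP k n.+1) => [lt_kn | lt_nk].
  by rewrite (big_pred1 (Ordinal lt_kn)).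
rewrite bin_small // mulr0n big_pred0 // => i.
by rewrite ltn_eqF // (leq_trans (ltn_ord i)).
Qed.

Lemma big_ord_widen_vanishing (V : nmodType) (n m : nat) (F : nat -> V) :
  (n <= m)%N -> (forall i, (n <= i < m)%N -> F i = 0) ->
  \sum_(i < n) F i = \sum_(i < m) F i.
Proof.
move=> le_nm F0; rewrite (big_ord_widen m F le_nm) big_mkcond /=.
by apply: eq_bigr => i _; case: ltnP => // le_ni; rewrite F0 // le_ni ltn_ord.
Qed.

Lemma exp2_bin_alternating_sum (R : comNzRingType) (N r : nat) :
  2 ^+ r * 'C(N, r)%:R =
  \sum_(i < (r./2).+1) (-1) ^+ i * 'C(2 * N - 2 * i, r - 2 * i)%:R * 'C(N, i)%:R
  :> R.
Proof.
pose term i : R := if (r < 2 * i)%N then 0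
                else (-1) ^+ i * 'C(2 * N - 2 * i, r - 2 * i)%:R * 'C(N, i)%:R.
have split2X : 2%:P * 'X + 1 = (1%:P * 'X + 1) ^+ 2 + (-1)%:P * 'X ^+ 2 :> {poly R}.
  by rewrite rmorph_nat polyCN polyC1; ring.
have -> : 2 ^+ r * 'C(N, r)%:R = \sum_(i < N.+1) term i.
  rewrite mulr_natr -coef_exprCX1 split2X exprDn coef_sum.
  apply: eq_bigr => i _.
  rewrite coefMn -exprM exprMn -rmorphXn -exprM mulrCA coefCM coefMXn /term.
  case: ltnP => _; first by rewrite mulr0 mul0rn.
  by rewrite coef_exprCX1 expr1n mulnBr mulr_natr.
rewrite (@big_ord_widen_vanishing _ _ (N + r).+1 term) => [||i /andP[lt_Ni _]].
- rewrite -(@big_ord_widen_vanishing _ (r./2).+1 _ term) => [||i /andP[lt_ri _]].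
  + apply: eq_bigr => i _; rewrite /term ifN //; have := ltn_ord i; lia.
  + lia.
  + rewrite /term ifT //; lia.
- lia.
- by rewrite /term (bin_small lt_Ni) mulr0 if_same.
Qed.

Lemma binz_nat (n k : nat) : binz n%:Z k = 'C(n, k)%:Z.
Proof. by []. Qed.

Theorem lemma19 (r : nat) (m : int) (h : 0 <= 2 * m + r%:Z) :
  (2 ^+ r) * binz (m + r%:Z) r =
  \sum_(i < (r./2).+1)
     (-1) ^+ i * binz (2 * m + 2 * r%:Z - 2 * (i : nat)%:Z) (r - 2 * i)%N
       * binz (m + r%:Z) i.
Proof.
have [N mrN] : exists N : nat, m + r%:Z = N%:Z.
  by exists (absz (m + r%:Z)); rewrite gez0_abs //; lia.
rewrite mrN binz_nat -natz exp2_bin_alternating_sum; apply: eq_bigr => i _.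
have -> : 2 * m + 2 * r%:Z - 2 * (i : nat)%:Z = (2 * N - 2 * i)%N%:Z.
  have := ltn_ord i; lia.
by rewrite !binz_nat !natz.
Qed.
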